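(* Let $G_0^*$ be a $k$-uniform hypergraph on $n$ vertices and let $\{U_1,\dots,U_t\}$ be a partition of its vertex set into $t$ sets of size $p$ (so $n=pt$). Order the vertices of $G_0^*$ so that $U_i$ consists of the $((i-1)p+1)$-th through the $(ip)$-th vertices, and compute $A(G_0^* )$ in this order. For $i=1,\dots,t$ let $G_i^*$ be a $(k,r)$-regular hypergraph on $m\ge 2$ vertices (the same $k$, $r$, $m$ for all $i$). Put $$a=\begin{cases} p\left(\binom{p+m-2}{k-2}-\binom{p-2}{k-2}\right) & \text{if } p\ge 2,\\ 0 & \text{if } p=1,\end{cases}\qquad b=\binom{p+m-2}{k-2},\qquad c=\binom{p+m-2}{k-2}-\binom{m-2}{k-2},$$ and $Y_i=A(G_i^* )+c(J_m-I_m)$. Let $G^*=G_0^*\odot_p^t G_i^*$ be the generalized corona. Then for every real $\lambda$ such that $Y_i-\lambda I_m$ is invertible for all $i=1,\dots,t$, $$P_{A(G^* )}(\lambda)=\Big(\prod_{i=1}^t \det(Y_i-\lambda I_m)\Big)^p\,\det\!\Big(A(G_0^* )+I_t\otimes\Big(\big(a-\tfrac{b^2pm}{r(k-1)+c(m-1)-\lambda}\big)J_p-(a+\lambda)I_p\Big)\Big).$$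
   Context: All hypergraphs are finite and simple: a hypergraph $G^*=(V,E)$ consists of a finite vertex set $V$ and a set $E$ of subsets of $V$ (hyperedges), each of size at least $2$. It is $k$-uniform if every hyperedge has exactly $k$ elements, and $(k,r)$-regular if it is $k$-uniform and every vertex lies in exactly $r$ hyperedges. For a hypergraph with vertices $v_1,\dots,v_n$, the adjacency matrix $A(G^* )$ is the $n\times n$ matrix whose $(i,j)$ entry, for $i\ne j$, is the number of hyperedges containing both $v_i$ and $v_j$, and whose diagonal entries are $0$. $J_n$ (resp. $J_{a,b}$) is the all-ones $n\times n$ (resp. $a\times b$) matrix, $I_n$ the identity matrix, $\otimes$ the Kronecker product. For a square matrix $M$, $P_M(\lambda)=\det(M-\lambda I)$. Binomial coefficients $\binom{x}{y}$ with integers $x\ge 0$ and $y$ are $0$ when $y<0$ or $y>x$. Generalized corona: let $G_0^*$ be a $k$-uniform hypergraph with vertex set $V_0$, $\{U_1,\dots,U_t\}$ a partition of $V_0$ with $|U_i|=p$, and $G_1^*,\dots,G_t^*$ $k$-uniform hypergraphs. The generalized corona $G_0^*\odot_p^t G_i^*$ is the $k$-uniform hypergraph obtained as follows: for each $i$ take $p$ copies $G_i^{*(1)},\dots,G_i^{*(p)}$ of $G_i^*$, all copies pairwise vertex-disjoint and disjoint from $V_0$. The vertex set is $V_0$ together with the vertices of all copies; the hyperedges are the hyperedges of $G_0^*$, the hyperedges of every copy, and, for every $i\in\{1,\dots,t\}$ and $j\in\{1,\dots,p\}$, every $k$-element subset of $U_i\cup V(G_i^{*(j)})$ that meets both $U_i$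 and $V(G_i^{*(j)})$. *)

From HB Require Import structures.
From mathcomp Require Import all_boot all_order all_algebra.
From mathcomp Require Export mxtens.
Set Implicit Arguments. Unset Strict Implicit. Unset Printing Implicit Defensive.
Import Order.TTheory GRing.Theory Num.Theory.
Local Open Scope ring_scope.

Definition is_hypergraph (V : finType) (E : {set {set V}}) : Prop :=
  forall e, e \in E -> (2 <= #|e|)%N.

Definition uniform (V : finType) (k : nat) (E : {set {set V}}) : Prop :=
  forall e, e \in E -> #|e| = k.

Definition regular (V : finType) (k r : nat) (E : {set {set V}}) : Prop :=
  uniform k E /\ forall v : V, #|[set e in E | v \in e]| = r.

Definition adj (V : finType) (E : {set {set V}}) (u v : V) : nat :=
  if u == v then 0%N else #|[set e in E | (u \in e) && (v \in e)]|.

Definition adjmx_ord (R : pzRingType) (n : nat) (E : {set {set 'I_n}}) : 'M[R]_n :=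
  \matrix_(i < n, j < n) (adj E i j)%:R.

Definition adjmx (R : pzRingType) (V : finType) (E : {set {set V}}) : 'M[R]_#|V| :=
  \matrix_(i, j) (adj E (enum_val i) (enum_val j))%:R.

Definition charP (R : comPzRingType) (n : nat) (M : 'M[R]_n) (l : R) : R :=
  \det (M - l%:M).

(* binomial coefficient C(x, k-2) with the convention C(x, y) = 0 for y < 0 *)
Definition binm2 (x k : nat) : nat := if (k < 2)%N then 0%N else 'C(x, k - 2).

(* G0 lives on 'I_(t*p); the block U_i is { v | v %/ p = i }, i.e. the
   ((i-1)p+1)-th to (ip)-th vertices.
   Vertex set: inl v for v a vertex of G0, inr (i, j, x) for vertex x of the
   j-th copy of G_i. *)
Definition corona_vertex (t p m : nat) := ('I_(t * p) + ('I_t * 'I_p * 'I_m))%type.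

Definition block (t p m : nat) (i : 'I_t) : {set corona_vertex t p m} :=
  [set inl v | v : 'I_(t * p) & (v %/ p)%N == i].

Definition copy_vertices (t p m : nat) (i : 'I_t) (j : 'I_p)
  : {set corona_vertex t p m} := [set inr (i, j, x) | x : 'I_m].

Definition corona (k t p m : nat) (E0 : {set {set 'I_(t * p)}})
  (G : 'I_t -> {set {set 'I_m}}) : {set {set corona_vertex t p m}} :=
  [set (@inl _ ('I_t * 'I_p * 'I_m)%type) @: e | e : {set 'I_(t * p)} in E0]
  :|: (\bigcup_(i < t) \bigcup_(j < p)
         [set (fun x : 'I_m => @inr 'I_(t * p) _ (i, j, x)) @: e | e : {set 'I_m} in G i])
  :|: (\bigcup_(i < t) \bigcup_(j < p)
         [set S : {set corona_vertex t p m} |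
            [&& #|S| == k, S \subset @block t p m i :|: @copy_vertices t p m i j,
                S :&: @block t p m i != set0 & S :&: @copy_vertices t p m i j != set0]]).

Arguments corona k {t p} m E0 G.
Arguments block {t p} m i.
Arguments copy_vertices {t p m} i j.

From HB Require Import structures.
From mathcomp Require Import all_boot all_order all_algebra.
From mathcomp Require Import mxtens perm.
From mathcomp Require Import ring.
Set Implicit Arguments. Unset Strict Implicit. Unset Printing Implicit Defensive.
Import Order.TTheory GRing.Theory Num.Theory.
Local Open Scope ring_scope.

(* List the vertices of the corona as those of G0 followed by the copies of the G_i.
   Counting hyperedges through pairs of vertices shows that the adjacency matrix of the
   corona minus lambda I is then the block matrix [P B; C D], where
   P = A(G0) + I_t (x) (a J_p - (a + lambda) I_p), D is block diagonal with p blocks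
   Y_i - lambda I_m for each i, and B, C have entry b exactly between U_i and the copies
   of G_i.  As G_i is (k,r)-regular, Y_i - lambda I has constant row sums s - lambda,
   s = r(k-1) + c(m-1), so D C = (s - lambda) C; hence the Schur complement of the
   invertible D is P - B C / (s - lambda), and B C = b^2 p m (I_t (x) J_p). *)

Lemma det_relabel (R : comPzRingType) (V : finType) N (f : 'I_N -> V)
    (F : V -> V -> R) :
  injective f -> N = #|V| ->
  \det (\matrix_(i < #|V|, j < #|V|) F (enum_val i) (enum_val j)) =
  \det (\matrix_(i < N, j < N) F (f i) (f j)).
Proof.
move=> f_inj eN; subst N.
have rf_inj : injective (enum_rank \o f) by move=> i j /enum_rank_inj /f_inj.
set A := \matrix_(i < #|V|, j < #|V|) F (enum_val i) (enum_val j); set s := perm rf_inj.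
have -> : \matrix_(i, j) F (f i) (f j) = row_perm s (col_perm s A).
  by apply/matrixP => i j; rewrite !mxE !permE /= !enum_rankK.
rewrite row_permE col_permE !det_mulmx mulrC -mulrA -det_mulmx -perm_mxM.
by rewrite mulVg perm_mx1 det1 mulr1.
Qed.

Lemma det_castmx (R : comPzRingType) n1 n2 (e : n1 = n2) (A : 'M[R]_n1) :
  \det (castmx (e, e) A) = \det A.
Proof. by subst n2; rewrite castmx_id. Qed.

Lemma det_mxdiag (R : comPzRingType) n (p_ : 'I_n -> nat)
    (B_ : forall i, 'M[R]_(p_ i)) :
  \det (\mxdiag_i B_ i) = \prod_i \det (B_ i).
Proof.
elim: n p_ B_ => [|n IHn] p_ B_.
  rewrite [RHS]big_ord0; move: (\mxdiag_i B_ i).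
  by rewrite big_ord0 => A; apply: det_mx00.
by rewrite mxdiag_recl det_castmx det_ublock IHn big_ord_recl.
Qed.

Lemma det_block_mx_schur (R : comPzRingType) n1 n2 (A : 'M[R]_n1)
    (B : 'M[R]_(n1, n2)) (C : 'M[R]_(n2, n1)) (D : 'M[R]_n2) (Z : 'M[R]_(n2, n1)) :
  C + D *m Z = 0 -> \det (block_mx A B C D) = \det (A + B *m Z) * \det D.
Proof.
move=> CDZ.
have <- : \det (block_mx A B C D *m block_mx 1%:M 0 Z 1%:M) = \det (block_mx A B C D).
  by rewrite det_mulmx det_lblock !det1 !mulr1.
by rewrite mulmx_block !mulmx0 !mulmx1 ?addr0 ?add0r CDZ det_ublock.
Qed.

Lemma mulmx_const_rowsum (R : pzRingType) n (M : 'M[R]_n) (s : R) :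
  (forall i, \sum_j M i j = s) -> M *m const_mx 1 = s *: (const_mx 1 : 'cV_n).
Proof.
move=> Ms; apply/matrixP => i j; rewrite !mxE -(Ms i) mulr1.
by under eq_bigr do rewrite mxE mulr1.
Qed.

Lemma card_bigcup_disjoint (I T : finType) (A_ : I -> {set T}) :
  (forall i j, i != j -> [disjoint A_ i & A_ j]) ->
  #|\bigcup_i A_ i| = (\sum_i #|A_ i|)%N.
Proof.
move=> disjA.
have cover1 x : (\sum_i (x \in A_ i) = (x \in \bigcup_i A_ i))%N.
  case: (boolP (x \in \bigcup_i A_ i)) => [/bigcupP [i _ xAi]|xA].
    rewrite (bigD1 i) //= xAi big1 // => j ji.
  by rewrite (disjointFl (disjA _ _ ji) xAi).
  rewrite big1 // => i _; case: (boolP (x \in A_ i)) => // xAi.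
  by case/negP: xA; apply/bigcupP; exists i.
transitivity (\sum_x \sum_i (x \in A_ i))%N.
  rewrite -sum1_card big_mkcond; apply: eq_bigr => x _.
  by rewrite cover1; case: (_ \in _).
rewrite exchange_big; apply: eq_bigr => i _.
by rewrite -sum1_card [RHS]big_mkcond; apply: eq_bigr => x _; case: (_ \in _).
Qed.

Lemma card_ksubsets_pair (T : finType) (A : {set T}) (u v : T) k :
  u \in A -> v \in A -> u != v ->
  #|[set S : {set T} | [&& S \subset A, #|S| == k, u \in S & v \in S]]| =
  binm2 (#|A| - 2) k.
Proof.
move=> uA vA uv.
have cardP : #|[set u; v]| = 2%N by rewrite cards2 uv.
have PA : [set u; v] \subset A by rewrite subUset !sub1set uA vA.
have subPE (S : {set T}) : ([set u; v] \subset S) = (u \in S) && (v \in S).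
  by rewrite subUset !sub1set.
set P := [set u; v] in cardP PA subPE *.
have -> : [set S : {set T} | [&& S \subset A, #|S| == k, u \in S & v \in S]] =
          [set S : {set T} | [&& S \subset A, #|S| == k & P \subset S]].
  by apply/setP => S; rewrite !inE subPE.

rewrite /binm2; case: ltnP => [k_lt2|k_ge2].
  apply/eqP; rewrite cards_eq0; apply/eqP/setP => S; rewrite !inE.
  apply/negP => /and3P [_ /eqP cardS PS].
  by move: k_lt2; rewrite -cardS -cardP ltnNge subset_leq_card.
have -> : (#|A| - 2)%N = #|A :\: P| by rewrite cardsDS // cardP.
rewrite -cards_draws -(@card_in_imset _ _ (fun S => S :\: P)).
  apply: eq_card => B; rewrite inE; apply/idP/idP.
    case/imsetP=> S; rewrite inE => /and3P [SA /eqP cardS PS] ->.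
    by rewrite setSD // cardsDS // cardS cardP eqxx.
  case/andP; rewrite subsetD => /andP [BA BP] /eqP cardB; apply/imsetP.
  exists (B :|: P); last by rewrite setDUl setDv setU0; apply/esym/setDidPl.
  rewrite inE subsetUr subUset BA PA /= andbT.
  by rewrite cardsU (disjoint_setI0 BP) cards0 subn0 cardB cardP subnK.
move=> S1 S2; rewrite !inE => /and3P [_ _ PS1] /and3P [_ _ PS2] eqD.
by rewrite -(setID S1 P) -(setID S2 P) (setIidPr PS1) (setIidPr PS2) eqD.
Qed.

Lemma leq_binm2 x y k : (x <= y)%N -> (binm2 x k <= binm2 y k)%N.
Proof. by rewrite /binm2 => le_xy; case: ifP => // _; apply: leq_bin2l. Qed.

Lemma adjC (V : finType) (E : {set {set V}}) x y : adj E x y = adj E y x.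
Proof.
rewrite /adj eq_sym; case: eqP => // _.
by apply: eq_card => e; rewrite !inE [(x \in e) && _]andbC.
Qed.

Lemma adjxx (V : finType) (E : {set {set V}}) x : adj E x x = 0%N.
Proof. by rewrite /adj eqxx. Qed.

Definition edges_through (T : finType) (E : {set {set T}}) (x y : T) :=
  [set e in E | (x \in e) && (y \in e)].

Lemma in_edges_through (T : finType) (E : {set {set T}}) x y e :
  (e \in edges_through E x y) = [&& e \in E, x \in e & y \in e].
Proof. by rewrite inE. Qed.

Lemma edges_throughC (T : finType) (E : {set {set T}}) x y :
  edges_through E x y = edges_through E y x.
Proof. by apply/setP => e; rewrite !inE [(x \in e) && _]andbC. Qed.

Lemma edges_throughU (T : finType) (E1 E2 : {set {set T}}) x y :
  edges_through (E1 :|: E2) x y = edges_through E1 x y :|: edges_through E2 x y.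
Proof. by apply/setP => e; rewrite !inE andb_orl. Qed.

Lemma edges_through_bigcup (I T : finType) (E_ : I -> {set {set T}}) x y :
  edges_through (\bigcup_i E_ i) x y = \bigcup_i edges_through (E_ i) x y.
Proof.
apply/setP => e; rewrite inE; apply/andP/bigcupP => [[/bigcupP [i _ eE] xye]|[i _]].
  by exists i; rewrite // inE eE.
by rewrite inE => /andP [eE ->]; split => //; apply/bigcupP; exists i.
Qed.

Lemma adjE (T : finType) (E : {set {set T}}) x y :
  adj E x y = if x == y then 0%N else #|edges_through E x y|.
Proof. by []. Qed.

Lemma card_edges_through_imset (T T' : finType) (f : T -> T') (E : {set {set T}}) x y :
  injective f ->
  #|edges_through [set f @: e | e : {set T} in E] (f x) (f y)| = #|edges_through E x y|.
Proof.
move=> f_inj; rewrite -(card_imset _ (imset_inj f_inj)); apply: eq_card => e'.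
rewrite inE; apply/andP/imsetP => [[/imsetP [e eE ->]]|[e]].
  by rewrite !(mem_imset _ _ f_inj) => xye; exists e; rewrite // inE eE.
by rewrite inE => /andP [eE xye] ->; rewrite !(mem_imset _ _ f_inj) imset_f.
Qed.

Lemma edges_through_imset_out (T T' : finType) (f : T -> T') (E : {set {set T}}) x' y' :
  x' \notin codom f -> edges_through [set f @: e | e : {set T} in E] x' y' = set0.
Proof.
move=> x'f; apply/setP => e'; rewrite !inE; apply/negbTE/andP => -[/imsetP [e _ ->]].
by case/andP => /imsetP [x _ ex]; move: x'f; rewrite ex codom_f.
Qed.

Lemma sum_adj_regular (V : finType) k r (E : {set {set V}}) (x : V) :
  regular k r E -> (\sum_y adj E x y = r * (k - 1))%N.
Proof.
case=> Ek Er.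
have -> : (\sum_y adj E x y =
           \sum_y \sum_(e in E | x \in e) ((y \in e) && (y != x)))%N.
  apply: eq_bigr => y _; rewrite /adj eq_sym; case: eqP => [_|_].
    by rewrite big1 // => e _; rewrite andbF.
  rewrite -sum1_card big_mkcond [RHS]big_mkcond /=.
  by apply: eq_bigr => e _; rewrite !inE andbT; case: (e \in E); case: (x \in e).
rewrite (exchange_big_dep xpredT) //= -(Er x) -sum1_card big_distrl /= [RHS]big_mkcond.
apply: eq_bigr => e _; rewrite inE; case: ifP => [/andP [eE xe]|/negbT Exe]; last first.
  by rewrite big_pred0 // => y; apply/negbTE.
rewrite mul1n -(Ek e eE) (cardsD1 x e) xe add1n subSS subn0 -sum1_card [RHS]big_mkcond /=.
by apply: eq_bigr => y _; rewrite !inE andbC; case: (_ && _).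
Qed.

Lemma sumr_adj_regular (R : pzRingType) (V : finType) k r (E : {set {set V}}) (x : V) :
  is_hypergraph E -> regular k r E -> \sum_y (adj E x y)%:R = r%:R * (k%:R - 1) :> R.
Proof.
move=> hE Ekr; rewrite -natr_sum (sum_adj_regular x Ekr) natrM.
case: k Ekr => [|k] [Ek Er]; last by rewrite subn1 /= -addn1 natrD addrK.
suff -> : r = 0%N by rewrite !mul0r.
(* At k = 0 the truncated k - 1 is 0 rather than -1, but then E has no edges. *)
rewrite -(Er x); apply/eqP; rewrite cards_eq0; apply/eqP/setP => e; rewrite !inE.
by apply/negbTE/andP => -[eE _]; move: (hE e eE); rewrite Ek.
Qed.

Definition mixed_ksets (T : finType) k (U C : {set T}) : {set {set T}} :=
  [set S : {set T} |
    [&& #|S| == k, S \subset U :|: C, S :&: U != set0 & S :&: C != set0]].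

Section MixedKsets.

Variables (T : finType) (k : nat) (U C : {set T}).

Lemma edges_through_mixed_out u v :
  ~~ ((u \in U :|: C) && (v \in U :|: C)) ->
  edges_through (mixed_ksets k U C) u v = set0.
Proof.
move=> uvUC; apply/setP => S; rewrite in_edges_through in_set0 inE.
apply/negbTE; apply: contra uvUC => /and3P [/and4P [_ /subsetP SUC _ _] uS vS].
by rewrite SUC ?SUC.
Qed.

Lemma mixed_ksetsC : mixed_ksets k U C = mixed_ksets k C U.
Proof. by apply/setP => S; rewrite !inE setUC [(S :&: C != set0) && _]andbC. Qed.

Hypothesis UC : [disjoint U & C].

Lemma cardsU_disjoint : #|U :|: C| = (#|U| + #|C|)%N.
Proof. by rewrite cardsU (disjoint_setI0 UC) cards0 subn0. Qed.

Lemma setI_neq0_compl (S : {set T}) :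
  S \subset U :|: C -> (S :&: C != set0) = ~~ (S \subset U).
Proof.
move=> SUC; apply/set0Pn/subsetPn => [[x /setIP [xS xC]]|[x xS xU]].
  by exists x => //; apply: contraL xC => xU; rewrite (disjointFr UC xU).
by exists x; rewrite inE xS; move/subsetP/(_ x xS): SUC; rewrite inE (negbTE xU).
Qed.

Lemma card_mixed_ksets_inner u v : u \in U -> v \in U -> u != v ->
  #|edges_through (mixed_ksets k U C) u v| =
  (binm2 (#|U| + #|C| - 2) k - binm2 (#|U| - 2) k)%N.
Proof.
move=> uU vU uv; have uUC : u \in U :|: C by rewrite inE uU.
have vUC : v \in U :|: C by rewrite inE vU.
rewrite -cardsU_disjoint -(card_ksubsets_pair k uUC vUC uv).
rewrite -(card_ksubsets_pair k uU vU uv).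
rewrite -cardsDS; last first.
  apply/subsetP => S; rewrite !inE => /and4P [SU -> -> ->].
  by rewrite (subset_trans SU) ?subsetUl.
apply: eq_card => S; rewrite !inE.
case SUC : (S \subset U :|: C); rewrite ?andbF //= (setI_neq0_compl SUC).
case uS : (u \in S); rewrite ?andbF //=.
have -> : S :&: U != set0 by apply/set0Pn; exists u; rewrite inE uS uU.
by case: (S \subset U); case: (#|S| == k); case: (v \in S).
Qed.

Lemma card_mixed_ksets_cross u v : u \in U -> v \in C ->
  #|edges_through (mixed_ksets k U C) u v| = binm2 (#|U| + #|C| - 2) k.
Proof.
move=> uU vC; have uUC : u \in U :|: C by rewrite inE uU.
have vUC : v \in U :|: C by rewrite inE vC orbT.
have uv : u != v by apply: contraTneq vC => <-; rewrite (disjointFr UC uU).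
rewrite -cardsU_disjoint -(card_ksubsets_pair k uUC vUC uv).
apply: eq_card => S; rewrite !inE.
case uS : (u \in S); case vS : (v \in S); rewrite ?andbF //=.
have -> : S :&: U != set0 by apply/set0Pn; exists u; rewrite inE uS uU.
have -> : S :&: C != set0 by apply/set0Pn; exists v; rewrite inE vS vC.
by rewrite !andbT andbC.
Qed.

End MixedKsets.

Lemma card_mixed_ksets_outer (T : finType) k (U C : {set T}) u v :
  [disjoint U & C] -> u \in C -> v \in C -> u != v ->
  #|edges_through (mixed_ksets k U C) u v| =
  (binm2 (#|U| + #|C| - 2) k - binm2 (#|C| - 2) k)%N.
Proof.
move=> UC uC vC uv; rewrite mixed_ksetsC addnC card_mixed_ksets_inner //.
by rewrite disjoint_sym.
Qed.

Section Corona.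

Variables (k t p m : nat).
Implicit Types (i : 'I_t) (j : 'I_p) (v w : 'I_(t * p)) (x y : 'I_m).
Local Notation V := (corona_vertex t p m).

(* [mxtens_unindex w] is (w %/ p, w %% p): w is vertex number [block_pos w] of U_(block_of w). *)
Definition block_of (w : 'I_(t * p)) : 'I_t := (mxtens_unindex w).1.
Definition block_pos (w : 'I_(t * p)) : 'I_p := (mxtens_unindex w).2.

Lemma eq_block_pos w1 w2 :
  (block_of w1 == block_of w2) && (block_pos w1 == block_pos w2) = (w1 == w2).
Proof. by rewrite -xpair_eqE -!surjective_pairing (can_eq (@mxtens_unindexK _ _)). Qed.

Lemma card_block_of i : #|[set w : 'I_(t * p) | block_of w == i]| = p.
Proof.
have -> : [set w : 'I_(t * p) | block_of w == i] = [set mxtens_index (i, j) | j : 'I_p].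
  apply/setP => w; rewrite inE; apply/eqP/imsetP => [<-|[j _ ->]].
    by exists (block_pos w); rewrite // -surjective_pairing mxtens_unindexK.
  by rewrite /block_of mxtens_indexK.
by rewrite card_imset ?card_ord // => j1 j2 /(can_inj (@mxtens_indexK _ _)) [].
Qed.

Lemma mem_block_inl i v : (inl v \in block m i) = (block_of v == i).
Proof. by rewrite (mem_imset _ _ (@inl_inj _ _)) inE -val_eqE. Qed.

Lemma mem_block_inr i z : (inr z \in (block m i : {set V})) = false.
Proof. by apply/imsetP => -[]. Qed.

Lemma mem_copy_inl i j v : (inl v \in (copy_vertices i j : {set V})) = false.
Proof. by apply/imsetP => -[]. Qed.

Lemma mem_copy_inr i j i' j' x :
  (inr (i', j', x) \in (copy_vertices i j : {set V})) = ((i', j') == (i, j)).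
Proof.
rewrite xpair_eqE.
by apply/imsetP/andP => [[y _ [-> ->]]|[/eqP -> /eqP ->]]; last exists x.
Qed.

Lemma card_block i : #|block m i : {set V}| = p.
Proof.
rewrite card_imset; last exact: inl_inj.
by rewrite -[RHS](card_block_of i); apply: eq_card => w; rewrite !inE.
Qed.

Lemma card_copy i j : #|copy_vertices i j : {set V}| = m.
Proof. by rewrite card_imset ?card_ord // => x y []. Qed.

Lemma disjoint_block_copy i j : [disjoint block m i & copy_vertices i j : {set V}].
Proof.
by apply/pred0P => -[v|[[i' j'] x]] /=; rewrite ?mem_copy_inl ?mem_block_inr ?andbF.
Qed.

Variables (E0 : {set {set 'I_(t * p)}}) (G : 'I_t -> {set {set 'I_m}}).

Definition base_edges : {set {set V}} :=
  [set (@inl _ ('I_t * 'I_p * 'I_m)%type) @: e | e : {set 'I_(t * p)} in E0].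

Definition copy_edges i j : {set {set V}} :=
  [set (fun x : 'I_m => @inr 'I_(t * p) _ (i, j, x)) @: e | e : {set 'I_m} in G i].

Definition join_edges i j : {set {set V}} :=
  mixed_ksets k (block m i) (copy_vertices i j).

Definition copy_star i j : {set {set V}} := copy_edges i j :|: join_edges i j.

Lemma coronaE :
  corona k m E0 G = base_edges :|: \bigcup_(ij : 'I_t * 'I_p) copy_star ij.1 ij.2.
Proof.
rewrite /corona -setUA -big_split; under eq_bigr do rewrite -big_split.
by rewrite pair_big.
Qed.

Lemma base_edges_inr e z : e \in base_edges -> inr z \notin e.
Proof. by case/imsetP => e0 _ ->; apply/negP => /imsetP [x _]. Qed.

Lemma copy_edges_inl i j e v : e \in copy_edges i j -> inl v \notin e.
Proof. by case/imsetP => e0 _ ->; apply/negP => /imsetP [x _]. Qed.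

Lemma copy_star_inr i j e i' j' x :
  e \in copy_star i j -> inr (i', j', x) \in e -> (i', j') = (i, j).
Proof.
case/setUP => [/imsetP [e0 _ ->] /imsetP [y _] [ei ej _]|]; first by rewrite ei ej.
rewrite inE => /and4P [_ /subsetP eUC _ _] /eUC.
by rewrite inE mem_block_inr mem_copy_inr => /eqP.
Qed.

Lemma copy_star_meets i j e z : e \in copy_star i j -> z \in e ->
  exists x, inr (i, j, x) \in e.
Proof.
case/setUP => [/imsetP [e0 _ ->] /imsetP [x xe0 _]|]; first by exists x; apply: imset_f.
rewrite inE => /and4P [_ _ _ /set0Pn [w /setIP [we /imsetP [x _ wE]]]].
by exists x; rewrite -wE.
Qed.

Lemma card_corona_through z1 z2 :
  #|edges_through (corona k m E0 G) z1 z2| =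
  (#|edges_through base_edges z1 z2| +
   \sum_i \sum_j (#|edges_through (copy_edges i j) z1 z2| +
                  #|edges_through (join_edges i j) z1 z2|))%N.
Proof.
rewrite coronaE edges_throughU cardsU edges_through_bigcup.
rewrite card_bigcup_disjoint => [|[i j] [i' j'] ne]; last first.
  rewrite -setI_eq0; apply/eqP/setP => e; rewrite in_setI !in_edges_through in_set0.
  apply/negbTE/andP => -[/and3P [eS z1e _] /andP [eS' _]].
  have [x xe] := copy_star_meets eS z1e.
  by move: ne; rewrite (copy_star_inr eS' xe) eqxx.
have -> : edges_through base_edges z1 z2 :&:
          \bigcup_ij edges_through (copy_star ij.1 ij.2) z1 z2 = set0.
  apply/setP => e; rewrite in_setI in_edges_through in_set0.
  apply/negbTE/andP => -[/and3P [eB z1e _] /bigcupP [ij _]].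
  rewrite in_edges_through => /and3P [eS _ _].
  by have [x] := copy_star_meets eS z1e; apply/negP/base_edges_inr.
rewrite cards0 subn0 pair_bigA; congr (_ + _)%N; apply: eq_bigr => -[i j] _.
rewrite edges_throughU cardsU -[RHS]subn0; congr (_ - _)%N; apply/eqP; rewrite cards_eq0.
apply/eqP/setP => e; rewrite in_setI !in_edges_through in_set0.
apply/negbTE/andP => -[/and3P [eC _ _] /and3P [+ _ _]].
rewrite inE => /and4P [_ _ /set0Pn [w /setIP [we /imsetP [v _ wE]]] _].
by move: we; rewrite wE; apply/negP/(copy_edges_inl _ eC).
Qed.

Lemma card_base_through_inl u v :
  #|edges_through base_edges (inl u) (inl v)| = #|edges_through E0 u v|.
Proof. exact/card_edges_through_imset/inl_inj. Qed.

Lemma base_through_inr z1 z : edges_through base_edges z1 (inr z) = set0.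
Proof. by rewrite edges_throughC edges_through_imset_out //; apply/negP => /codomP []. Qed.

Lemma copy_through_inl i j v z2 : edges_through (copy_edges i j) (inl v) z2 = set0.
Proof. by rewrite edges_through_imset_out //; apply/negP => /codomP []. Qed.

Lemma card_copy_through_inr i j i1 j1 x i2 j2 y :
  #|edges_through (copy_edges i j) (inr (i1, j1, x)) (inr (i2, j2, y))| =
  ((((i1, j1) == (i, j)) && ((i2, j2) == (i, j))) * #|edges_through (G i) x y|)%N.
Proof.
have out i' j' x' : (i', j') != (i, j) ->
    inr (i', j', x') \notin codom (fun x : 'I_m => @inr 'I_(t * p) _ (i, j, x)).
  by move=> ne; apply/negP => /codomP [x'' [e1 e2 _]]; move: ne; rewrite e1 e2 eqxx.
case: (eqVneq (i1, j1) (i, j)) => [[-> ->]|ne1] /=; last first.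
  by rewrite mul0n edges_through_imset_out ?cards0 ?out.
case: (eqVneq (i2, j2) (i, j)) => [[-> ->]|ne2] /=; last first.
  by rewrite mul0n edges_throughC edges_through_imset_out ?cards0 ?out.
by rewrite mul1n card_edges_through_imset // => x1 x2 [].
Qed.

Lemma card_join_through_inl i j u v : u != v ->
  #|edges_through (join_edges i j) (inl u) (inl v)| =
  (((block_of u == i) && (block_of v == i)) *
   (binm2 (p + m - 2) k - binm2 (p - 2) k))%N.
Proof.
move=> uv; case: (boolP (_ && _)) => [/andP [ui vi]|out]; last first.
  rewrite edges_through_mixed_out ?cards0 //.
  by rewrite !in_setU !mem_block_inl !mem_copy_inl !orbF.
by rewrite mul1n card_mixed_ksets_inner ?card_block ?card_copy ?mem_block_inl //;
  exact: disjoint_block_copy.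
Qed.

Lemma card_join_through_inl_inr i j u i' j' x :
  #|edges_through (join_edges i j) (inl u) (inr (i', j', x))| =
  (((block_of u == i) && ((i', j') == (i, j))) * binm2 (p + m - 2) k)%N.
Proof.
case: (boolP (_ && _)) => [/andP [ui ij]|out]; last first.
  rewrite edges_through_mixed_out ?cards0 //.
  by rewrite !in_setU mem_block_inl mem_copy_inl mem_block_inr mem_copy_inr orbF.
rewrite mul1n card_mixed_ksets_cross ?card_block ?card_copy ?mem_block_inl ?mem_copy_inr //.
exact: disjoint_block_copy.
Qed.

Lemma card_join_through_inr i j i1 j1 x i2 j2 y : (i1, j1, x) != (i2, j2, y) ->
  #|edges_through (join_edges i j) (inr (i1, j1, x)) (inr (i2, j2, y))| =
  ((((i1, j1) == (i, j)) && ((i2, j2) == (i, j))) *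
   (binm2 (p + m - 2) k - binm2 (m - 2) k))%N.
Proof.
move=> ne; case: (boolP (_ && _)) => [/andP [ij1 ij2]|out]; last first.
  by rewrite edges_through_mixed_out ?cards0 // !in_setU !mem_block_inr !mem_copy_inr.
by rewrite mul1n card_mixed_ksets_outer ?card_block ?card_copy ?mem_copy_inr //;
  exact: disjoint_block_copy.
Qed.

Lemma adj_corona_inl u v : u != v ->
  adj (corona k m E0 G) (inl u) (inl v) =
  (adj E0 u v +
   (block_of u == block_of v) * (p * (binm2 (p + m - 2) k - binm2 (p - 2) k)))%N.
Proof.
move=> uv; rewrite !adjE (inj_eq (@inl_inj _ _)) (negbTE uv).
rewrite card_corona_through card_base_through_inl; congr (_ + _)%N.
under eq_bigr do under eq_bigr do
  rewrite copy_through_inl cards0 add0n card_join_through_inl //.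
rewrite (big_only1 (block_of u)) // => [|i ne _]; last first.
  by rewrite big1 // => j _; rewrite [block_of u == i]eq_sym (negbTE ne).
rewrite big_const_ord iter_addn_0 eqxx andTb [block_of v == _]eq_sym.
by rewrite mulnC mulnCA.
Qed.

Lemma adj_corona_inl_inr u i j x :
  adj (corona k m E0 G) (inl u) (inr (i, j, x)) =
  ((block_of u == i) * binm2 (p + m - 2) k)%N.
Proof.
rewrite adjE card_corona_through base_through_inr cards0 add0n.
under eq_bigr do under eq_bigr do
  rewrite copy_through_inl cards0 add0n card_join_through_inl_inr.
rewrite pair_bigA (big_only1 (i, j)) // => [|ij ne _]; first by rewrite eqxx andbT.
by rewrite -surjective_pairing [(i, j) == _]eq_sym (negbTE ne) andbF.
Qed.

Lemma adj_corona_inr i1 j1 x i2 j2 y :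
  adj (corona k m E0 G) (inr (i1, j1, x)) (inr (i2, j2, y)) =
  if (i1, j1) == (i2, j2)
  then (adj (G i1) x y + (x != y) * (binm2 (p + m - 2) k - binm2 (m - 2) k))%N
  else 0%N.
Proof.
have [[<- <- <-]|ne] := eqVneq (i1, j1, x) (i2, j2, y); first by rewrite !adjxx !eqxx.
rewrite [LHS]adjE (inj_eq (@inr_inj _ _)) (negbTE ne).
rewrite card_corona_through base_through_inr cards0 add0n.
under eq_bigr do under eq_bigr do
  rewrite card_copy_through_inr card_join_through_inr //.
rewrite pair_bigA (big_only1 (i1, j1)) // => [|ij ne1 _]; last first.
  by rewrite -surjective_pairing [(i1, j1) == _]eq_sym (negbTE ne1).
rewrite /= eqxx /= [(i2, j2) == _]eq_sym.
case: (eqVneq (i1, j1) (i2, j2)) => [[ei ej]|_]; last by rewrite !mul0n.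
subst i1 j1.
by move: ne; rewrite !xpair_eqE !eqxx /= => xy; rewrite /adj (negbTE xy) !mul1n.
Qed.

End Corona.

Section Relabel.

Variables t p m : nat.

(* The vertices of G0 come first; then, for each vertex w of G0 in turn, the copy number
   [block_pos w] of G_(block_of w). *)
Definition vertex_of (s : 'I_(t * p + \sum_(w < t * p) m)) : corona_vertex t p m :=
  match split s with
  | inl u => inl u
  | inr s' => let w := tagnat.sig1 s' in inr (block_of w, block_pos w, tagnat.sig2 s' : 'I_m)
  end.

Lemma vertex_of_inj : injective vertex_of.
Proof.
move=> s1 s2; rewrite /vertex_of.
case: (split_ordP s1) => u1 ->; case: (split_ordP s2) => u2 -> //; first by case=> ->.
case=> e1 e2 e3; have e : tagnat.sig1 u1 = tagnat.sig1 u2.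
  by apply/val_inj; rewrite /= (divn_eq (tagnat.sig1 u1) p) e1 e2 -divn_eq.
congr rshift; apply: tagnat.sig_inj; rewrite !tagnat.sigE12.
by move: (tagnat.sig2 u1) (tagnat.sig2 u2) e3; rewrite e => x1 x2 ->.
Qed.

Lemma card_corona_vertex :
  (t * p + \sum_(w < t * p) m)%N = #|{: corona_vertex t p m}|.
Proof.
by rewrite card_sum !card_prod !card_ord big_const_ord iter_addn_0 [(m * _)%N]mulnC.
Qed.

End Relabel.

Section CoronaCharpoly.

Variables (R : fieldType) (k r t p m : nat).
Variables (E0 : {set {set 'I_(t * p)}}) (G : 'I_t -> {set {set 'I_m}}) (lambda : R).
Variables (a b c : R) (Y : 'I_t -> 'M[R]_m).
Hypothesis def_a : a = if (2 <= p)%N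
  then p%:R * ((binm2 (p + m - 2) k)%:R - (binm2 (p - 2) k)%:R) else 0.
Hypothesis def_b : b = (binm2 (p + m - 2) k)%:R.
Hypothesis def_c : c = (binm2 (p + m - 2) k)%:R - (binm2 (m - 2) k)%:R.
Hypothesis def_Y : forall i, Y i = adjmx_ord R (G i) + c *: (const_mx 1 - 1%:M).
Hypothesis hG : forall i, is_hypergraph (G i).
Hypothesis hGkr : forall i, regular k r (G i).
Hypothesis hY : forall i, Y i - lambda%:M \in unitmx.

Local Notation V := (corona_vertex t p m).
Local Notation N := (\sum_(w < t * p) m)%N.

Let s : R := r%:R * (k%:R - 1) + c * (m%:R - 1).
Let F (z1 z2 : V) : R := (adj (corona k m E0 G) z1 z2)%:R - (z1 == z2)%:R * lambda.

Let P : 'M[R]_(t * p) := adjmx_ord R E0 +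
  tensmx (1%:M : 'M[R]_t) (a *: (const_mx 1 : 'M[R]_p) - (a + lambda) *: 1%:M).
Let Bw (w : 'I_(t * p)) : 'M[R]_(t * p, m) := \matrix_(u, x) ((block_of u == block_of w)%:R * b).
Let Cw (w : 'I_(t * p)) : 'M[R]_(m, t * p) := \matrix_(x, v) ((block_of w == block_of v)%:R * b).
Let B : 'M[R]_(t * p, N) := \mxrow_w Bw w.
Let C : 'M[R]_(N, t * p) := \mxcol_w Cw w.
Let D : 'M[R]_N := \mxdiag_(w < t * p) (Y (block_of w) - lambda%:M).

Lemma corona_charmx_block :
  \matrix_(s1, s2) F (vertex_of s1) (vertex_of s2) = block_mx P B C D.
Proof.
apply/matrixP => s1 s2; rewrite mxE /vertex_of.
case: (split_ordP s1) => u ->; case: (split_ordP s2) => v ->.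
- rewrite block_mxEul /F /P !mxE -![(mxtens_unindex _).1]/(block_of _).
  rewrite -![(mxtens_unindex _).2]/(block_pos _) (inj_eq (@inl_inj _ _)).
  have [<-|uv] := eqVneq u v; first by rewrite !adjxx !eqxx /=; ring.
  rewrite /= mul0r subr0 adj_corona_inl // natrD !natrM.
  rewrite natrB ?leq_binm2 ?leq_sub2r ?leq_addr //.
  have [e|ne] := eqVneq (block_of u) (block_of v); last by rewrite /= !mul0r !addr0.
  have pos_uv : block_pos u != block_pos v by move: uv; rewrite -eq_block_pos e eqxx.
  (* two vertices of one block force p >= 2, the case where a is not 0 *)
  have p_gt1 : (1 < p)%N.
    by have := max_card [set block_pos u; block_pos v]; rewrite cards2 pos_uv card_ord.
  by rewrite def_a p_gt1 (negbTE pos_uv) /= mulr0 subr0 mulr1.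
- rewrite block_mxEur /F /B /Bw !mxE adj_corona_inl_inr natrM -def_b.
  by rewrite /= mul0r subr0.
- rewrite block_mxEdl /F /C /Cw !mxE adjC adj_corona_inl_inr natrM -def_b.
  by rewrite /= mul0r subr0 eq_sym.
- rewrite block_mxEdr /F /D !mxE adj_corona_inr (inj_eq (@inr_inj _ _)).
  rewrite !xpair_eqE !eq_block_pos.
  case: (eqVneq (tagnat.sig1 u) (tagnat.sig1 v)) => [_|_] /=; last first.
    by rewrite mxE mul0r subr0.
  rewrite conform_mx_id def_Y !mxE.
  case: (eqVneq (tagnat.sig2 u) (tagnat.sig2 v)) => [->|ne] /=.
    by rewrite adjxx subrr mulr0 addr0 mul1r sub0r.
  rewrite /= mulr0n !subr0 mul0r subr0 mulr1 natrD mul1n natrB -?def_c //.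
  by apply: leq_binm2; rewrite leq_sub2r // leq_addl.
Qed.

Lemma mulmx_Y_const i :
  (Y i - lambda%:M) *m const_mx 1 = (s - lambda) *: (const_mx 1 : 'cV_m).
Proof.
apply: mulmx_const_rowsum => x; rewrite def_Y.
under eq_bigr do rewrite !mxE.
rewrite !big_split /= (sumr_adj_regular R x (@hG i) (hGkr i)) -!addrA; congr (_ + _).
have sum_delta : \sum_(y < m) ((x == y)%:R : R) = 1.
  by rewrite (big_only1 x) ?eqxx // => y; rewrite eq_sym => /negbTE ->.
rewrite -mulr_sumr sumrB sum_delta sumr_const card_ord sumrN (big_only1 x) ?eqxx //.
by move=> y; rewrite eq_sym => /negbTE ->.
Qed.

Lemma det_D : \det D = (\prod_i \det (Y i - lambda%:M)) ^+ p.
Proof.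
rewrite det_mxdiag (partition_big (@block_of t p) predT) //= -prodrXl.
apply: eq_bigr => i _.
rewrite (eq_bigr (fun=> \det (Y i - lambda%:M))) => [|w /eqP -> //].
rewrite prodr_const; congr (_ ^+ _).
by rewrite -[RHS](card_block_of p i); apply: eq_card => w; rewrite !inE.
Qed.

Lemma unitmx_D : D \in unitmx.
Proof.
rewrite unitmxE det_D unitfE expf_neq0 //; apply/prodf_neq0 => i _.
by rewrite -unitfE -unitmxE.
Qed.

Lemma mulmx_D_C : D *m C = (s - lambda) *: C.
Proof.
have DCw w : (Y (block_of w) - lambda%:M) *m Cw w = (s - lambda) *: Cw w.
  have -> : Cw w = const_mx 1 *m \row_v ((block_of w == block_of v)%:R * b).
    by apply/matrixP => x v; rewrite !mxE big_ord1 !mxE mul1r.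
  by rewrite mulmxA mulmx_Y_const scalemxAl.
by rewrite mul_mxdiag_mxcol; apply/matrixP => s1 v; rewrite mxE DCw !mxE.
Qed.

Lemma schur_D_C : C + D *m (- (s - lambda)^-1 *: C) = 0.
Proof.
rewrite -scalemxAr mulmx_D_C scalerA mulNr.
have [s0|s_neq0] := eqVneq (s - lambda) 0; last by rewrite mulVf // scaleN1r subrr.
(* If s = lambda then D *m C = 0, so C = 0 as D is invertible. *)
have C0 : C = 0 by rewrite -(mulKmx unitmx_D C) mulmx_D_C s0 scale0r mulmx0.
by rewrite C0 scaler0 addr0.
Qed.

Lemma mulmx_B_C :
  B *m C = (b ^+ 2 * p%:R * m%:R) *: tensmx (1%:M : 'M[R]_t) (const_mx 1 : 'M[R]_p).
Proof.
apply/matrixP => u v; rewrite mul_mxrow_mxcol summxE !mxE.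
rewrite -[(mxtens_unindex u).1]/(block_of u) -[(mxtens_unindex v).1]/(block_of v).
under eq_bigr do rewrite mxE; under eq_bigr do under eq_bigr do rewrite !mxE.
under eq_bigr do rewrite sumr_const card_ord.
pose K := b * ((block_of u == block_of v)%:R * b) *+ m.
rewrite (eq_bigr (fun w => if block_of w == block_of u then K else 0)) => [|w _]; last first.
  by have [->|_] := eqVneq (block_of w) (block_of u); rewrite ?mul1r // !mul0r mul0rn.
rewrite -big_mkcond (eq_bigl [in [set w | block_of w == block_of u]]) => [|w]; last first.
  by rewrite inE.
rewrite sumr_const (card_block_of p (block_of u)) -mulrnA -[_ *+ (m * p)]mulr_natr.
by rewrite natrM mulr1; ring.
Qed.

Lemma charP_corona :
  charP (adjmx R (corona k m E0 G)) lambda =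
  (\prod_i \det (Y i - lambda%:M)) ^+ p *
  \det (adjmx_ord R E0 +
        tensmx (1%:M : 'M[R]_t)
          ((a - b ^+ 2 * p%:R * m%:R / (s - lambda)) *: (const_mx 1 : 'M[R]_p)
           - (a + lambda) *: 1%:M)).
Proof.
rewrite /charP; have -> : adjmx R (corona k m E0 G) - lambda%:M =
          \matrix_(i < #|{: V}|, j < #|{: V}|) F (enum_val i) (enum_val j).
  by apply/matrixP => i j; rewrite !mxE /F (inj_eq enum_val_inj) mulr_natl.
rewrite (det_relabel F (@vertex_of_inj t p m) (card_corona_vertex t p m)).
rewrite corona_charmx_block (det_block_mx_schur _ _ schur_D_C) det_D mulrC.
congr (_ * \det _); rewrite -scalemxAr mulmx_B_C scalerA.
by apply/matrixP => u v; rewrite !mxE; ring.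
Qed.

End CoronaCharpoly.

Unset Implicit Arguments.

Theorem theorem3p1 (R : realFieldType) (k r t p m : nat)
  (E0 : {set {set 'I_(t * p)}}) (G : 'I_t -> {set {set 'I_m}})
  (hp : (0 < p)%N) (hm : (2 <= m)%N)
  (hE0 : is_hypergraph E0) (hE0k : uniform k E0)
  (hG : forall i, is_hypergraph (G i)) (hGkr : forall i, regular k r (G i))
  (lambda : R) :
  let a : R := if (2 <= p)%N
               then p%:R * ((binm2 (p + m - 2) k)%:R - (binm2 (p - 2) k)%:R)
               else 0 in
  let b : R := (binm2 (p + m - 2) k)%:R in
  let c : R := (binm2 (p + m - 2) k)%:R - (binm2 (m - 2) k)%:R in
  let Y (i : 'I_t) : 'M[R]_m :=
    adjmx_ord R (G i) + c *: (const_mx 1 - 1%:M) in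
  (forall i, Y i - lambda%:M \in unitmx) ->
  charP (adjmx R (corona k m E0 G)) lambda =
  (\prod_(i < t) \det (Y i - lambda%:M)) ^+ p *
  \det (adjmx_ord R E0 +
        tensmx (1%:M : 'M[R]_t)
          ((a - b ^+ 2 * p%:R * m%:R
                / (r%:R * (k%:R - 1) + c * (m%:R - 1) - lambda)) *: (const_mx 1 : 'M[R]_p)
           - (a + lambda) *: 1%:M)).
Proof. by move=> a b c Y hY; apply: charP_corona. Qed.
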